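(* Let $n\ge1$, $q\in[0,1]$, and let $\mu_q$ be the probability distribution on $\{z\in\{0,1\}^{2n}:\mathrm{wt}(z)=n\}$ defined by $\mu_q(z)\propto q^{-2A(z)}$ if $0<q\le1$, and $\mu_0=\delta_{z,0^n1^n}$. Then for every $w\in\{1,\dots,2n\}$, $$\mu_q\Bigl(\#\{k\le w: z_k=1\}\;\le\;\#\{k\le w-1:z_k=0\}\Bigr)\;\ge\;\tfrac12 .$$ (Geometrically: in the state $\sum_z q^{-A(z)}|x,z\rangle_V$, the $w$-th particle is found in the left half of the grid with probability at least $1/2$.)
   Context: $A(z)=\sum_{j=1}^{2n}jz_j-\frac{n(n+1)}{2}$ for $z\in\{0,1\}^{2n}$ of Hamming weight $n$. A string $z$ is identified with the monotone lattice path in the rotated $n\times n$ grid from the top vertex $(0,0)$ to the bottom vertex $(n,n)$ whose $k$-th step goes from $(i,j)$ to $(i+1-z_k,j+z_k)$; $A(z)$ is the number of unit squares of the grid lying to the right of this path. The $w$-th step (edge) has horizontal coordinate $t=n+j-i+z_w$, where $(i,j)$ is its starting vertex, and lies in the left half of the grid iff $t\le n$, which is exactly the displayed event. *)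

From HB Require Import structures.
From mathcomp Require Import all_boot all_order all_algebra.
Set Implicit Arguments. Unset Strict Implicit. Unset Printing Implicit Defensive.
Import Order.TTheory GRing.Theory Num.Theory.

(* Binary strings z in {0,1}^{2n}; position j (1-based, as in the paper)
   is the ordinal i : 'I_(2*n) with j = i + 1. *)
Definition bstring (n : nat) := {ffun 'I_(2 * n) -> bool}.

Definition hweight n (z : bstring n) : nat := \sum_(i < 2 * n) (z i : nat).

Definition Aval n (z : bstring n) : nat :=
  (\sum_(i < 2 * n) i.+1 * (z i : nat)) - (n * n.+1) %/ 2.

Definition zmin n : bstring n := [ffun i : 'I_(2 * n) => n <= i].

(* mu_q(z): for 0 < q, proportional to q^{-2A(z)} on strings of weight n;
   for q = 0, the point mass at 0^n 1^n. (Only evaluated on weight-n z.) *)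
Definition mu (R : realFieldType) n (q : R) (z : bstring n) : R :=
  (if q == 0 then (z == zmin n)%:R
  else q ^- (2 * Aval z)%N /
       \sum_(y : bstring n | hweight y == n) q ^- (2 * Aval y)%N)%R.

(* #{k <= w : z_k = 1} (1-based k), i.e. 0-based indices i < w *)
Definition ones_upto n (z : bstring n) (w : nat) : nat :=
  #|[set i : 'I_(2 * n) | (i < w) && z i]|.
(* #{k <= w-1 : z_k = 0} (1-based k), i.e. 0-based indices i < w - 1 *)
Definition zeros_upto n (z : bstring n) (w : nat) : nat :=
  #|[set i : 'I_(2 * n) | (i < w.-1) && ~~ z i]|.

Definition left_prob (R : realFieldType) n (q : R) (w : nat) : R :=
  (\sum_(z : bstring n | (hweight z == n) && (ones_upto z w <= zeros_upto z w)%N)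
     mu q z)%R.

(** The event is a condition on the height walk [H(m) = #0s - #1s] among the
    first [m] letters: it holds iff [H(w-1) >= 0] and [H(w) >= 0].  On the
    complementary event both heights are [<= 0]; reflecting the walk on the
    excursion around [w], from its last zero before [w-1] to its first zero
    after [w], is an involution that preserves the weight, lands in the event,
    and can only decrease [sum_m #1s(m)], i.e. increase [A].  Since [q <= 1],
    [mu_q] is nondecreasing in [A], so the complement has at most the mass of
    the event. *)
From HB Require Import structures.
From mathcomp Require Import all_boot all_order all_algebra.
From mathcomp Require Import zify lra.
Import Order.TTheory GRing.Theory Num.Theory.
Set Implicit Arguments. Unset Strict Implicit.

Lemma ler_sum_of_inj (R : numDomainType) (T : finType) (D E : pred T)
    (f : T -> R) (phi : T -> T) :
  injective phi ->
  (forall z, D z -> ~~ E z -> D (phi z) && E (phi z)) ->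
  (forall z, D z -> ~~ E z -> f z <= f (phi z))%R ->
  (forall z, D z -> 0 <= f z)%R ->
  (\sum_(z | D z && ~~ E z) f z <= \sum_(z | D z && E z) f z)%R.
Proof.
move=> phi_inj phiDE f_le f_ge0.
rewrite [leRHS](reindex_inj phi_inj) /=.
apply: (@le_trans _ _ (\sum_(z | D z && ~~ E z) f (phi z))%R).
  by apply: ler_sum => z /andP[]; apply: f_le.
rewrite [leLHS]big_mkcond [leRHS]big_mkcond /=; apply: ler_sum => z _.
case: ifP => [/andP[Dz nEz]|_]; first by rewrite phiDE.
by case: ifP => // /andP[Dphiz _]; apply: f_ge0.
Qed.

Section HeightWalk.

Implicit Types (g : nat -> bool) (m : nat).

Definition nones g m : nat := \sum_(i < m) (g i : nat).

Definition height g m : int := (Posz m - Posz (nones g m) * 2)%R.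

Lemma nonesS g m : nones g m.+1 = nones g m + g m.
Proof. by rewrite /nones big_ord_recr. Qed.

Lemma nones_le g m : nones g m <= m.
Proof.
elim: m => [|m IH]; first by rewrite /nones big_ord0.
by rewrite nonesS; case: (g m) => /=; lia.
Qed.

Lemma height0 g : height g 0 = 0%R.
Proof. by rewrite /height /nones big_ord0. Qed.

Lemma heightS g m : height g m.+1 = (height g m + (if g m then -1 else 1))%R.
Proof. by rewrite /height nonesS; case: (g m) => /=; lia. Qed.

Lemma sum_nones_negb g m : \sum_(i < m) (~~ g i : nat) = m - nones g m.
Proof.
elim: m => [|m IH]; first by rewrite big_ord0.
by rewrite big_ord_recr /= IH nonesS; have := nones_le g m; case: (g m) => /=; lia.
Qed.

(* Summation by parts; it relates [A] to the area [sum_m nones g m]. *)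
Lemma weighted_ones_add_sum_nones g m :
  \sum_(i < m) i.+1 * g i + \sum_(k < m) nones g k = m * nones g m.
Proof.
elim: m => [|m IH]; first by rewrite !big_ord0.
rewrite !big_ord_recr /= nonesS; move: IH.
set S := \sum_(i < m) _; set T := \sum_(i < m) _; clearbody S T.
by case: (g m) => /=; nia.
Qed.

Lemma heights_le0_of_not_ge0 g m : 0 < m ->
  ~~ ((0 <= height g m.-1)%R && (0 <= height g m)%R) ->
  (height g m.-1 <= 0)%R /\ (height g m <= 0)%R.
Proof.
case: m => // m _ /=; rewrite heightS.
by case: (g m) => /=; rewrite negb_and => /orP[] h; lia.
Qed.

Fixpoint last_zero g M : nat :=
  if M is k.+1 then (if height g k.+1 == 0%R then k.+1 else last_zero g k) else 0.

Lemma last_zero_le g M : last_zero g M <= M.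
Proof. by elim: M => //= k IH; case: ifP => // _; lia. Qed.

Lemma height_last_zero g M : height g (last_zero g M) = 0%R.
Proof. by elim: M => [|k IH] /=; [exact: height0 | case: ifP => // /eqP]. Qed.

Lemma height_neq0_after_last_zero g M k :
  last_zero g M < k <= M -> height g k != 0%R.
Proof.
elim: M => [|M IH] /=; first lia.
case: ifP => [_|/negbT hM]; first lia.
by move=> hk; have [->//|neM] := eqVneq k M.+1; apply: IH; lia.
Qed.

Variable w : nat.

Definition arc_start g := last_zero g w.-1.

Fixpoint no_return g m : bool :=
  if m is k.+1 then no_return g k && ((k < w) || (height g k != 0%R)) else true.

Definition in_arc g m := (arc_start g <= m) && no_return g m.

Definition flip_bit g i := (arc_start g <= i) && no_return g i.+1.

Lemma no_return_before g m : m <= w -> no_return g m.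
Proof. by elim: m => //= m IH hm; rewrite IH; [apply/orP; left|]; lia. Qed.

Lemma in_arc_around g m : w.-1 <= m <= w -> in_arc g m.
Proof.
move=> hm; rewrite /in_arc no_return_before ?andbT; last lia.
by have := last_zero_le g w.-1; rewrite /arc_start; lia.
Qed.

Lemma height_le0_after g : (height g w <= 0)%R ->
  forall m, w <= m -> no_return g m -> (height g m <= 0)%R.
Proof.
move=> hw m /subnKC <-; elim: (m - w) => [|d IH]; first by rewrite addn0.
rewrite addnS /= => /andP[hn /orP[|hne]]; first lia.
by have := IH hn; rewrite heightS; move: hne; case: (g (w + d)) => /=; lia.
Qed.

(* The walk has no zero in [(arc_start g, w.-1]], so it cannot change sign there. *)
Lemma height_le0_before g : (height g w.-1 <= 0)%R ->
  forall m, arc_start g <= m <= w.-1 -> (height g m <= 0)%R.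
Proof.
move=> hw1 m /andP[hstart hm].
have [d hd] : exists d, m + d = w.-1 by exists (w.-1 - m); lia.
elim: d m hstart {hm} hd => [|d IH] k hk hkd; first by rewrite -(addn0 k) hkd.
have hk1 := IH k.+1 ltac:(lia) ltac:(lia).
have : height g k.+1 != 0%R.
  by apply: (@height_neq0_after_last_zero _ w.-1); rewrite -/(arc_start g); lia.
by move: hk1; rewrite heightS; case: (g k) => /=; lia.
Qed.

Lemma height_in_arc_le0 g :
  (height g w.-1 <= 0)%R -> (height g w <= 0)%R ->
  forall m, in_arc g m -> (height g m <= 0)%R.
Proof.
move=> hw1 hw m /andP[start_le nr]; case: (leqP w m) => hwm.
  exact: height_le0_after.
by apply: height_le0_before; lia.
Qed.

Section Reflection.

Variables (N : nat) (g g' : nat -> bool).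
Hypothesis g'E : forall i, i < N -> g' i = g i (+) flip_bit g i.

(* The flipping starts at [arc_start g] and stops at a return to 0, and at
   both ends the height is 0, so [- height = height] there. *)
Lemma height_reflect m : m <= N ->
  height g' m = if in_arc g m then (- height g m)%R else height g m.
Proof.
elim: m => [|m IH] hm; first by rewrite !height0; case: ifP.
rewrite !heightS IH ?g'E; try lia.
rewrite /flip_bit /in_arc /=.
have := height_last_zero g w.-1; rewrite -/(arc_start g) => hz.
case ha: (arc_start g <= m); case ha1: (arc_start g <= m.+1);
  case hn: (no_return g m) => /=; try lia;
  try (have e : arc_start g = m.+1 by lia); try rewrite e heightS in hz;
  case: (g m) hz => /=; case: (m < w) => /=;
  case: (eqVneq (height g m) 0%R) => [->|] /=; lia.
Qed.

Lemma height_eq0_reflect m : m <= N -> (height g' m == 0%R) = (height g m == 0%R).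
Proof. by move=> hm; rewrite height_reflect //; case: ifP; rewrite ?oppr_eq0. Qed.

Lemma last_zero_reflect M : M <= N -> last_zero g' M = last_zero g M.
Proof. by elim: M => //= M IH hM; rewrite height_eq0_reflect // IH //; lia. Qed.

Lemma no_return_reflect m : m <= N -> no_return g' m = no_return g m.
Proof. by elim: m => //= m IH hm; rewrite IH ?height_eq0_reflect //; lia. Qed.

Lemma flip_bit_reflect i : w.-1 <= N -> i < N -> flip_bit g' i = flip_bit g i.
Proof.
move=> hwN hi.
by rewrite /flip_bit /arc_start last_zero_reflect // no_return_reflect.
Qed.

End Reflection.
End HeightWalk.

Section Strings.

Variables (n w : nat).
Hypotheses (w_gt0 : 0 < w) (w_le : w <= 2 * n).

Definition path_of (z : bstring n) (i : nat) : bool :=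
  odflt false (omap z (insub i : option 'I_(2 * n))).

Lemma path_of_ord z (j : 'I_(2 * n)) : path_of z j = z j.
Proof. by rewrite /path_of valK. Qed.

Lemma path_of_lt z i (hi : i < 2 * n) : path_of z i = z (Ordinal hi).
Proof. by rewrite /path_of insubT. Qed.

Lemma hweightE z : hweight z = nones (path_of z) (2 * n).
Proof. by apply: eq_bigr => i _; rewrite path_of_ord. Qed.

Lemma card_prefix (f : bool -> bool) (z : bstring n) m : m <= 2 * n ->
  #|[set i : 'I_(2 * n) | (i < m) && f (z i)]| = \sum_(i < m) (f (path_of z i) : nat).
Proof.
move=> hm; rewrite -sum1_card.
rewrite (big_ord_widen (2 * n) (fun i => (f (path_of z i) : nat)) hm).
rewrite big_mkcond [RHS]big_mkcond /=; apply: eq_bigr => i _.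
by rewrite in_set path_of_ord; case: (i < m); case: (f (z i)).
Qed.

Definition in_event (z : bstring n) := ones_upto z w <= zeros_upto z w.

Lemma in_eventE z : in_event z =
  (0 <= height (path_of z) w.-1)%R && (0 <= height (path_of z) w)%R.
Proof.
rewrite /in_event /ones_upto /zeros_upto (card_prefix id) // (card_prefix negb); last lia.
rewrite sum_nones_negb -/(nones _ w).
move: w_gt0; case: w => // v _ /=; rewrite heightS nonesS /height.
by case: (path_of z v) => /=; apply/idP/idP; lia.
Qed.

Definition reflection (z : bstring n) : bstring n :=
  [ffun i : 'I_(2 * n) => z i (+) flip_bit w (path_of z) i].

Lemma path_of_reflection z i :
  i < 2 * n -> path_of (reflection z) i = path_of z i (+) flip_bit w (path_of z) i.
Proof. by move=> hi; rewrite !path_of_lt ffunE. Qed.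

Lemma height_reflection z m : m <= 2 * n ->
  height (path_of (reflection z)) m =
  if in_arc w (path_of z) m then (- height (path_of z) m)%R else height (path_of z) m.
Proof. exact/height_reflect/path_of_reflection. Qed.

Lemma reflectionK : involutive reflection.
Proof.
move=> z; apply/ffunP => i; rewrite !ffunE.
rewrite (flip_bit_reflect (N := 2 * n) (path_of_reflection z)) //; last lia.
by rewrite -addbA addbb addbF.
Qed.

Lemma hweight_reflection z : hweight z = n -> hweight (reflection z) = n.
Proof.
rewrite !hweightE => hz; have := height_reflection z (leqnn _).
have -> : height (path_of z) (2 * n) = 0%R by rewrite /height hz; lia.
by rewrite oppr0 if_same /height; lia.
Qed.

Lemma in_event_reflection z : ~~ in_event z -> in_event (reflection z).
Proof.
rewrite !in_eventE => /(heights_le0_of_not_ge0 w_gt0)[hw1 hw].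
by rewrite !height_reflection ?in_arc_around; lia.
Qed.

Lemma weighted_onesE (z : bstring n) :
  \sum_(i < 2 * n) i.+1 * z i = \sum_(i < 2 * n) i.+1 * path_of z i.
Proof. by apply: eq_bigr => i _; rewrite path_of_ord. Qed.

Lemma Aval_reflection z : hweight z = n -> ~~ in_event z ->
  Aval z <= Aval (reflection z).
Proof.
move=> hz hR; have hz' := hweight_reflection hz.
rewrite in_eventE in hR; have [hw1 hw] := heights_le0_of_not_ge0 w_gt0 hR.
have area_le : \sum_(k < 2 * n) nones (path_of (reflection z)) k
               <= \sum_(k < 2 * n) nones (path_of z) k.
  apply: leq_sum => k _; have := height_reflection z (ltnW (ltn_ord k)).
  by case: ifP => [/(height_in_arc_le0 hw1 hw)|_]; rewrite /height; lia.
rewrite /Aval leq_sub2r // !weighted_onesE.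
have := weighted_ones_add_sum_nones (path_of z) (2 * n).
have := weighted_ones_add_sum_nones (path_of (reflection z)) (2 * n).
rewrite -!hweightE hz hz'; lia.
Qed.

End Strings.

Lemma nones_zmin n m : m <= 2 * n -> nones (path_of (zmin n)) m = m - n.
Proof.
elim: m => [|m IH] hm; first by rewrite /nones big_ord0.
by rewrite nonesS IH ?path_of_lt ?ffunE /=; lia.
Qed.

Lemma hweight_zmin n : hweight (zmin n) = n.
Proof. by rewrite hweightE nones_zmin //; lia. Qed.

Lemma in_event_zmin n w : 0 < n -> 0 < w <= 2 * n -> in_event w (zmin n).
Proof.
move=> n_gt0 /andP[w_gt0 w_le]; rewrite in_eventE // /height !nones_zmin; lia.
Qed.

Local Open Scope ring_scope.

Section Distribution.

Variables (R : realFieldType) (n : nat) (q : R).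
Hypotheses (q_ge0 : 0 <= q) (q_le1 : q <= 1).

Lemma mu_ge0 (z : bstring n) : 0 <= mu q z.
Proof.
rewrite /mu; case: (q == 0); first by case: (z == zmin n).
by rewrite divr_ge0 ?sumr_ge0 // => *; rewrite invr_ge0 exprn_ge0.
Qed.

Lemma mu_total : \sum_(z : bstring n | hweight z == n) mu q z = 1.
Proof.
have zmin_n : hweight (zmin n) == n by rewrite hweight_zmin.
rewrite /mu; have [_|q_neq0] := eqVneq q 0.
  by rewrite (bigD1 (zmin n)) //= eqxx big1 ?addr0 // => z /andP[_ /negbTE ->].
rewrite -mulr_suml mulfV // (bigD1 (zmin n)) //= lt0r_neq0 // ltr_pwDl //.
  by rewrite invr_gt0 exprn_gt0 // lt_def q_neq0.
by rewrite sumr_ge0 // => *; rewrite invr_ge0 exprn_ge0.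
Qed.

Lemma mu_le_Aval (y z : bstring n) : q != 0 -> (Aval y <= Aval z)%N -> mu q y <= mu q z.
Proof.
move=> q_neq0 le_yz; have q_gt0 : 0 < q by rewrite lt_def q_neq0.
rewrite /mu (negbTE q_neq0); apply: ler_wpM2r.
  by rewrite invr_ge0 sumr_ge0 // => *; rewrite invr_ge0 exprn_ge0.
rewrite lef_pV2 ?posrE ?exprn_gt0 // -(subnKC (_ : 2 * Aval y <= 2 * Aval z)%N).
  by rewrite exprD ler_piMr ?exprn_ge0 ?exprn_ile1.
by rewrite leq_mul2l.
Qed.

Lemma mu_reflection_ge w (z : bstring n) : (0 < n)%N -> (0 < w <= 2 * n)%N ->
  hweight z == n -> ~~ in_event w z -> mu q z <= mu q (reflection w z).
Proof.
move=> n_gt0 /andP[w_gt0 w_le] /eqP hz not_ev.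
have [q0|q_neq0] := eqVneq q 0; last exact/mu_le_Aval/Aval_reflection.
rewrite /mu q0 eqxx; suff -> : (z == zmin n) = false by case: (_ == _).
by apply: contraNF not_ev => /eqP ->; apply: in_event_zmin; rewrite ?w_gt0.
Qed.

End Distribution.

Theorem mainTheorem6 (R : realFieldType) (n : nat) (q : R) (w : nat) :
  (1 <= n)%N -> 0 <= q -> q <= 1 -> (1 <= w <= 2 * n)%N ->
  2^-1 <= @left_prob R n q w.
Proof.
move=> n_gt0 q_ge0 q_le1 hw; have /andP[w_gt0 w_le] := hw.
have reflection_in_event (z : bstring n) : hweight z == n -> ~~ in_event w z ->
    (hweight (reflection w z) == n) && in_event w (reflection w z).
  by move=> /eqP hz not_ev; rewrite hweight_reflection // eqxx in_event_reflection.
have complement_le := ler_sum_of_inj (can_inj (reflectionK w_gt0 w_le))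
  reflection_in_event (fun z => mu_reflection_ge q_ge0 q_le1 n_gt0 hw)
  (fun z _ => mu_ge0 q_ge0 z).
have := mu_total n q_ge0; rewrite (bigID (in_event w)) /=.
rewrite /left_prob; lra.
Qed.
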